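(* Let $n\ge 1$, let $\gamma_1,\dots,\gamma_n\in\mathbb{C}$, and let $f,s_1,\dots,s_n$ be $(n-1)$-times differentiable functions of $z$. Then $$W^{\gamma_1,\dots,\gamma_n}_n(f s_1,\dots,f s_n)=f^n\cdot W^{\gamma_1,\dots,\gamma_n}_n(s_1,\dots,s_n).$$
   Context: For constants $\gamma_1,\dots,\gamma_n$ put $\nabla_i=\partial_z+\gamma_i$. The $Z$-twisted Wronskian ($Z=\mathrm{diag}(\gamma_1,\dots,\gamma_n)$) of functions $s_1,\dots,s_n$ is the determinant $$W^{\gamma_1,\dots,\gamma_n}_n(s_1,\dots,s_n)=\det_{1\le i,j\le n}\big[\nabla_i^{\,j-1}s_i\big].$$ *)

From HB Require Import structures.
From mathcomp Require Import all_boot all_order all_algebra.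
From mathcomp Require Import all_classical all_reals all_analysis.
From mathcomp Require Import complex.
Set Implicit Arguments. Unset Strict Implicit. Unset Printing Implicit Defensive.
Import Order.TTheory GRing.Theory Num.Theory.
Import numFieldNormedType.Exports.
Local Open Scope ring_scope.
Local Open Scope classical_set_scope.

(* C viewed as a numFieldType, so that MathComp-Analysis equips it with the
   norm topology of the complex modulus and complex derivatives apply. *)
Definition cplx (R : realType) : numFieldType := R[i].

Definition tnabla (R : realType) (g : cplx R) (h : cplx R -> cplx R) : cplx R -> cplx R :=
  fun z => derive1 h z + g * h z.

(* Z-twisted Wronskian: det [ nabla_i^(j-1) s_i ]_{i,j}  (0-indexed here). *)
Definition twronskian (R : realType) (n : nat) (gam : 'I_n -> cplx R)
  (s : 'I_n -> cplx R -> cplx R) (z : cplx R) : cplx R :=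
  \det (\matrix_(i < n, j < n) iter j (tnabla (gam i)) (s i) z).

From HB Require Import structures.
From mathcomp Require Import all_boot all_order all_algebra.
From mathcomp Require Import all_classical all_reals all_analysis.
From mathcomp Require Import complex.
Set Implicit Arguments. Unset Strict Implicit. Unset Printing Implicit Defensive.
Import Order.TTheory GRing.Theory Num.Theory.
Import numFieldNormedType.Exports.
Local Open Scope ring_scope.
Local Open Scope classical_set_scope.

(* Since [nabla_c (f h) = f' h + f (nabla_c h)], the twisted derivative obeys
   the Leibniz rule [nabla_c^j (f s) = sum_k C(j, k) f^(j - k) nabla_c^k s].
   Hence the twisted Wronskian matrix of the [f s_i] is that of the [s_i]
   times the matrix [C(j, k) f^(j - k)]_(k, j), which is upper triangular
   with diagonal [f], so the determinant gains the factor [f ^ n]. *)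

Lemma leibniz_sum_step (A : pzSemiRingType) (F : nat -> nat -> A) j :
  \sum_(k < j.+1) 'C(j, k)%:R * (F (j - k).+1 k + F (j - k)%N k.+1) =
  \sum_(k < j.+2) 'C(j.+1, k)%:R * F (j.+1 - k)%N k.
Proof.
rewrite (@big_ord_recl _ _ _ j.+1) bin0 subn0 mul1r.
under [in RHS]eq_bigr => k _ do rewrite lift0 binS subSS natrD mulrDl.
under [in LHS]eq_bigr => k _ do rewrite mulrDr.
rewrite !big_split addrA; congr (_ + _).
rewrite big_ord_recl big_ord_recr /= bin0 subn0 mul1r bin_small // mul0r addr0.
by congr (_ + _); apply: eq_bigr => k _; rewrite /bump add1n subnSK.
Qed.

Section TwistedLeibniz.
Variable R : realType.
Local Notation C := (cplx R).
Implicit Types (c r : C) (f g : C -> C).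

Lemma derive1D f g x : derivable f x 1 -> derivable g x 1 ->
  derive1 (fun y => f y + g y) x = derive1 f x + derive1 g x.
Proof.
by move=> df dg; rewrite !derive1E -[X in X = _]/('D_1 (f + g) x); apply: deriveD.
Qed.

Lemma derive1M f g x : derivable f x 1 -> derivable g x 1 ->
  derive1 (fun y => f y * g y) x = derive1 f x * g x + f x * derive1 g x.
Proof.
move=> df dg; rewrite !derive1E -[X in X = _]/('D_1 (f * g) x).
by rewrite (deriveM df dg) addrC [_ * g x]mulrC.
Qed.

Lemma derive1_sum m (F : 'I_m -> C -> C) x : (forall k, derivable (F k) x 1) ->
  derive1 (fun y => \sum_(k < m) F k y) x = \sum_(k < m) derive1 (F k) x.
Proof.
move=> dF; rewrite -fct_sumE derive1E (derive_sum dF).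
by apply: eq_bigr => k _; rewrite derive1E.
Qed.

Fixpoint derivable_upto (m : nat) f : Prop :=
  if m is m'.+1 then (forall x, derivable f x 1) /\ derivable_upto m' (derive1 f)
  else True.

Lemma derivable_uptoP m f :
  derivable_upto m f <-> forall k x, (k < m)%N -> derivable (derive1n k f) x 1.
Proof.
elim: m f => [|m IHm] f; first by split.
split=> [[df /IHm df'] [|k] x km|df].
- exact: df.
- by rewrite derive1Sn; apply: df'.
- split=> [x|]; first exact: (df 0%N).
  by apply/IHm => k x km; rewrite -derive1Sn; apply: df.
Qed.

Lemma derivable_upto_le m m' f : (m <= m')%N ->
  derivable_upto m' f -> derivable_upto m f.
Proof.
move=> mm' /derivable_uptoP df; apply/derivable_uptoP => k x km.
exact: df _ _ (leq_trans km mm').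
Qed.

Lemma derivable_uptoD m f g : derivable_upto m f -> derivable_upto m g ->
  derivable_upto m (fun y => f y + g y).
Proof.
elim: m f g => [//|m IHm] f g /= [df df'] [dg dg']; split.
  by move=> x; exact: (derivableD (df x) (dg x)).
have -> : derive1 (fun y => f y + g y) = fun y => derive1 f y + derive1 g y.
  by apply/funext => x; apply: derive1D.
exact: IHm.
Qed.

Lemma derivable_uptoMl m r f : derivable_upto m f ->
  derivable_upto m (fun y => r * f y).
Proof.
elim: m f => [//|m IHm] f /= [df df']; split.
  by move=> x; exact: (@derivableZ _ _ _ f r x 1 (df x)).
have -> : derive1 (fun y => r * f y) = fun y => r * derive1 f y.
  by apply/funext => x; apply: derive1Ml.
exact: IHm.
Qed.

Lemma derivable_upto_tnabla m c f : derivable_upto m.+1 f ->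
  derivable_upto m (tnabla c f).
Proof.
move=> df; apply: derivable_uptoD; first exact: df.2.
by apply: derivable_uptoMl; apply: derivable_upto_le (leqnSn m) df.
Qed.

Lemma derivable_upto_iter_tnabla m k c f : derivable_upto (m + k) f ->
  derivable_upto m (iter k (tnabla c) f).
Proof.
elim: k m => [|k IHk] m; first by rewrite addn0.
by rewrite addnS -addSn => /IHk; apply: derivable_upto_tnabla.
Qed.

Lemma derivable_iter_tnabla k m c f x : (k < m)%N -> derivable_upto m f ->
  derivable (iter k (tnabla c) f) x 1.
Proof.
move=> km df.
have : derivable_upto (m - k) (iter k (tnabla c) f).
  by apply: derivable_upto_iter_tnabla; rewrite subnK // ltnW.
by rewrite -subnSK // => -[].
Qed.

Lemma tnablaM c f g x : derivable f x 1 -> derivable g x 1 ->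
  tnabla c (fun y => f y * g y) x = derive1 f x * g x + f x * tnabla c g x.
Proof. by move=> df dg; rewrite /tnabla derive1M // mulrDr addrA mulrCA. Qed.

Lemma tnablaMl c r f x : derivable f x 1 ->
  tnabla c (fun y => r * f y) x = r * tnabla c f x.
Proof. by move=> df; rewrite /tnabla derive1Ml // mulrDr mulrCA. Qed.

Lemma tnabla_sum c m (F : 'I_m -> C -> C) x : (forall k, derivable (F k) x 1) ->
  tnabla c (fun y => \sum_(k < m) F k y) x = \sum_(k < m) tnabla c (F k) x.
Proof. by move=> dF; rewrite /tnabla derive1_sum // mulr_sumr -big_split. Qed.

Lemma iter_tnablaM c f g j : derivable_upto j f -> derivable_upto j g ->
  iter j (tnabla c) (fun y => f y * g y) =
  (fun y => \sum_(k < j.+1)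
     'C(j, k)%:R * (derive1n (j - k) f y * iter k (tnabla c) g y)).
Proof.
elim: j => [|j IHj] df dg; first by apply/funext => y; rewrite big_ord1 /= mul1r.
rewrite iterS IHj; last 2 first.
- exact: derivable_upto_le (leqnSn j) df.
- exact: derivable_upto_le (leqnSn j) dg.
apply/funext => y.
have dfk k : derivable (derive1n (j - k) f) y 1.
  by apply: (derivable_uptoP _ _).1 df _ _ _; rewrite ltnS leq_subr.
have dgk (k : 'I_j.+1) : derivable (iter k (tnabla c) g) y 1.
  exact: derivable_iter_tnabla (ltn_ord k) dg.
have dfgk (k : 'I_j.+1) :
    derivable (fun y => derive1n (j - k) f y * iter k (tnabla c) g y) y 1.
  exact: derivableM (dfk k) (dgk k).
rewrite tnabla_sum => [|k]; last exact: (@derivableZ _ _ _ _ _ y 1 (dfgk k)).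
under eq_bigr => k _ do rewrite tnablaMl // tnablaM //.
by rewrite -(@leibniz_sum_step _ (fun a b => derive1n a f y * iter b (tnabla c) g y)).
Qed.

Definition leibniz_mx n f (z : C) : 'M[C]_n :=
  \matrix_(k < n, j < n) ('C(j, k)%:R * derive1n (j - k) f z).

Lemma det_leibniz_mx n f z : \det (leibniz_mx n f z) = f z ^+ n.
Proof.
rewrite -det_tr det_trig; last first.
  by apply/is_trig_mxP => i j ij; rewrite !mxE bin_small // mul0r.
rewrite (eq_bigr (fun=> f z)) ?prodr_const ?card_ord // => i _.
by rewrite !mxE binn subnn mul1r.
Qed.

Lemma iter_tnabla_mxM n (gam : 'I_n -> C) f (s : 'I_n -> C -> C) z :
  derivable_upto n.-1 f -> (forall i, derivable_upto n.-1 (s i)) ->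
  \matrix_(i < n, j < n) iter j (tnabla (gam i)) (fun y => f y * s i y) z =
  \matrix_(i < n, j < n) iter j (tnabla (gam i)) (s i) z *m leibniz_mx n f z.
Proof.
move=> df ds; apply/matrixP => i j; rewrite !mxE.
have jn : (j <= n.-1)%N by rewrite -ltnS (ltn_predK (ltn_ord j)).
rewrite (iter_tnablaM _ (derivable_upto_le jn df) (derivable_upto_le jn (ds i))).
rewrite (big_ord_widen n (fun k => 'C(j, k)%:R *
  (derive1n (j - k) f z * iter k (tnabla (gam i)) (s i) z))) // big_mkcond.
apply: eq_bigr => k _; rewrite !mxE ltnS; case: leqP => [_|jk].
  by rewrite [RHS]mulrC -mulrA.
by rewrite bin_small // !mul0r mulr0.
Qed.
End TwistedLeibniz.

Theorem mainTheorem3 (R : realType) (n : nat) (gam : 'I_n -> cplx R)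
    (f : cplx R -> cplx R) (s : 'I_n -> cplx R -> cplx R) :
  (0 < n)%N ->
  (forall (k : nat) (z : cplx R), (k < n.-1)%N -> derivable (derive1n k f) z 1) ->
  (forall (i : 'I_n) (k : nat) (z : cplx R), (k < n.-1)%N -> derivable (derive1n k (s i)) z 1) ->
  forall z : cplx R,
    twronskian gam (fun i x => f x * s i x) z = f z ^+ n * twronskian gam s z.
Proof.
move=> _ df ds z; rewrite /twronskian iter_tnabla_mxM; last 2 first.
- exact/derivable_uptoP.
- by move=> i; apply/derivable_uptoP; apply: ds.
by rewrite det_mulmx det_leibniz_mx mulrC.
Qed.
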